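(* In a Douglian pre-Hilbert $*$-category, every contraction has a codilator.
   Context: A $*$-category is a category with a choice of $f^*\colon Y\to X$ for each $f\colon X\to Y$ such that $1^*=1$, $(gf)^*=f^*g^*$, $(f^* )^*=f$; $f$ is an isometry if $f^*f=1$. A pre-Hilbert $*$-category is a $*$-category with (R1) a zero object, (R2) orthonormal biproducts of all pairs of objects (biproducts $(X,s_1,r_1,s_2,r_2)$ with $r_k=s_k^*$), (R3) an isometric kernel for every morphism, and (R4) every diagonal $\Delta\colon X\to X\oplus X$ a kernel of some morphism. Such a category is additive. For Hermitian endomorphisms $a,b$ of $A$, $a\leq b$ means $b-a=y^*y$ for some $y\colon A\to Y$. A morphism $f$ is a contraction if $f^*f\leq 1$. A morphism $f\colon A\to X$ is Douglian if for every morphism $g\colon A\to Y$ with $g^*g=f^*f$ there exists $h\colon X\to Y$ with $hf=g$; a pre-Hilbert $*$-category is Douglian if all its morphisms are Douglian. A codilation of $f\colon X\to Y$ is a cospan $(T,t_1,t_2)$ with $t_1\colon X\to T$, $t_2\colon Y\to T$ isometries and $t_2^*t_1=f$. A codilator of $f$ is a codilation $(S,s_1,s_2)$ such that for every codilation $(T,t_1,t_2)$ of $f$ there is a unique isometry $t\colon S\to T$ with $ts_1=t_1$ and $ts_2=t_2$. *)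

Set Implicit Arguments.
Unset Strict Implicit.

Record StarCat := {
  Ob :> Type;
  Hom : Ob -> Ob -> Type;
  comp : forall X Y Z : Ob, Hom Y Z -> Hom X Y -> Hom X Z;
  idm : forall X : Ob, Hom X X;
  star : forall X Y : Ob, Hom X Y -> Hom Y X;
  comp_assoc : forall (W X Y Z : Ob) (h : Hom Y Z) (g : Hom X Y) (f : Hom W X),
      comp h (comp g f) = comp (comp h g) f;
  comp_id_l : forall (X Y : Ob) (f : Hom X Y), comp (idm Y) f = f;
  comp_id_r : forall (X Y : Ob) (f : Hom X Y), comp f (idm X) = f;
  star_id : forall X : Ob, star (idm X) = idm X;
  star_comp : forall (X Y Z : Ob) (g : Hom Y Z) (f : Hom X Y),
      star (comp g f) = comp (star f) (star g);
  star_star : forall (X Y : Ob) (f : Hom X Y), star (star f) = f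
}.

Arguments comp {C X Y Z} g f : rename.
Arguments idm {C} X : rename.
Arguments star {C X Y} f : rename.

Section Defs.
Variable C : StarCat.

Definition isometry (X Y : C) (f : Hom X Y) : Prop :=
  comp (star f) f = idm X.

Definition is_zero_obj (Z : C) : Prop :=
  (forall X : C, exists f : Hom X Z, forall g : Hom X Z, g = f) /\
  (forall X : C, exists f : Hom Z X, forall g : Hom Z X, g = f).

Definition is_zero_mor (X Y : C) (f : Hom X Y) : Prop :=
  exists (Z : C) (a : Hom X Z) (b : Hom Z Y), is_zero_obj Z /\ f = comp b a.

Definition is_biproduct (X Y P : C) (s1 : Hom X P) (r1 : Hom P X)
    (s2 : Hom Y P) (r2 : Hom P Y) : Prop :=
  comp r1 s1 = idm X /\ comp r2 s2 = idm Y /\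
  is_zero_mor (comp r2 s1) /\ is_zero_mor (comp r1 s2) /\
  (forall (W : C) (f : Hom W X) (g : Hom W Y),
      exists u : Hom W P, comp r1 u = f /\ comp r2 u = g /\
        forall u' : Hom W P, comp r1 u' = f -> comp r2 u' = g -> u' = u) /\
  (forall (W : C) (f : Hom X W) (g : Hom Y W),
      exists v : Hom P W, comp v s1 = f /\ comp v s2 = g /\
        forall v' : Hom P W, comp v' s1 = f -> comp v' s2 = g -> v' = v).

Definition is_orthonormal_biproduct (X Y P : C) (s1 : Hom X P) (s2 : Hom Y P)
  : Prop := is_biproduct s1 (star s1) s2 (star s2).

Definition is_kernel (X Y K : C) (f : Hom X Y) (k : Hom K X) : Prop :=
  is_zero_mor (comp f k) /\
  forall (W : C) (g : Hom W X), is_zero_mor (comp f g) ->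
    exists u : Hom W K, comp k u = g /\
      forall u' : Hom W K, comp k u' = g -> u' = u.

Definition pre_hilbert : Prop :=
  (exists Z : C, is_zero_obj Z) /\
  (forall X Y : C, exists (P : C) (s1 : Hom X P) (s2 : Hom Y P),
      is_orthonormal_biproduct s1 s2) /\
  (forall (X Y : C) (f : Hom X Y), exists (K : C) (k : Hom K X),
      is_kernel f k /\ isometry k) /\
  (* (R4): every diagonal X -> X (+) X is a kernel of some morphism *)
  (forall (X P : C) (s1 s2 : Hom X P), is_orthonormal_biproduct s1 s2 ->
     forall d : Hom X P, comp (star s1) d = idm X -> comp (star s2) d = idm X ->
     exists (Z : C) (g : Hom P Z), is_kernel g d).

(** The canonical sum in the additive structure: h = f + g, i.e.
    h = nabla o <f, g> computed through a biproduct B (+) B. *)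
Definition is_sum (A B : C) (f g h : Hom A B) : Prop :=
  exists (P : C) (s1 : Hom B P) (r1 : Hom P B) (s2 : Hom B P) (r2 : Hom P B)
         (u : Hom A P) (v : Hom P B),
    is_biproduct s1 r1 s2 r2 /\
    comp r1 u = f /\ comp r2 u = g /\
    comp v s1 = idm B /\ comp v s2 = idm B /\
    h = comp v u.

(** a <= b  iff  b - a = y^* y for some y, i.e. b = a + y^* y. *)
Definition hle (A : C) (a b : Hom A A) : Prop :=
  exists (Y : C) (y : Hom A Y), is_sum a (comp (star y) y) b.

Definition contraction (X Y : C) (f : Hom X Y) : Prop :=
  hle (comp (star f) f) (idm X).

Definition douglian_mor (A X : C) (f : Hom A X) : Prop :=
  forall (Y : C) (g : Hom A Y), comp (star g) g = comp (star f) f ->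
    exists h : Hom X Y, comp h f = g.

Definition douglian : Prop :=
  pre_hilbert /\ forall (A X : C) (f : Hom A X), douglian_mor f.

Definition is_codilation (X Y T : C) (f : Hom X Y) (t1 : Hom X T) (t2 : Hom Y T)
  : Prop := isometry t1 /\ isometry t2 /\ comp (star t2) t1 = f.

Definition is_codilator (X Y S : C) (f : Hom X Y) (s1 : Hom X S) (s2 : Hom Y S)
  : Prop :=
  is_codilation f s1 s2 /\
  forall (T : C) (t1 : Hom X T) (t2 : Hom Y T), is_codilation f t1 t2 ->
    exists t : Hom S T, isometry t /\ comp t s1 = t1 /\ comp t s2 = t2 /\
      forall t' : Hom S T, isometry t' -> comp t' s1 = t1 -> comp t' s2 = t2 ->
        t' = t.

Definition has_codilator (X Y : C) (f : Hom X Y) : Prop :=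
  exists (S : C) (s1 : Hom X S) (s2 : Hom Y S), is_codilator f s1 s2.

End Defs.

Set Implicit Arguments.
Unset Strict Implicit.

(* A contraction f satisfies f^* f + y^* y = 1 for some y, so t = <f, y> is an
   isometry into Y (+) Z and (T, t, s_Y) is a codilation of f.  Factor the
   cotuple c = [t, s_Y] : X (+) Y -> T as c = m e with m an isometry and e
   zero-epi; using the equalizers provided by (R4), e is epi.  The Gram
   morphism c'^* c' of the cotuple of any codilation (T', t1, t2) of f is
   determined by f, hence equals e^* e, so e being Douglian yields h with
   h e = c'.  Since e is epi, h is an isometry and is unique: (M, e i_X, e i_Y)
   is a codilator. *)

Section StarCategory.
Variable C : StarCat.
Local Notation "g ∘ f" := (comp g f) (at level 40, left associativity).

Definition epi (A M : C) (e : Hom A M) : Prop :=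
  forall (W : C) (a b : Hom M W), a ∘ e = b ∘ e -> a = b.

Definition zero_epi (A M : C) (e : Hom A M) : Prop :=
  forall (W : C) (a : Hom M W), is_zero_mor (a ∘ e) -> is_zero_mor a.

Lemma star_comp_swap (X Y Z : C) (a : Hom X Y) (b : Hom Z Y) :
  star a ∘ b = star (star b ∘ a).
Proof. now rewrite star_comp, star_star. Qed.

Lemma isometry_cancel (X Y W : C) (m : Hom X Y) (x : Hom W X) :
  isometry m -> star m ∘ (m ∘ x) = x.
Proof. intro Hm. now rewrite comp_assoc, Hm, comp_id_l. Qed.

Lemma epi_star_cancel (A M W : C) (e : Hom A M) (a b : Hom W M) :
  epi e -> star e ∘ a = star e ∘ b -> a = b.
Proof.
  intros He E.
  rewrite <- (star_star a), <- (star_star b); f_equal.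
  apply He. now rewrite <- (star_star e), <- !star_comp, E.
Qed.

Lemma is_zero_mor_compl (X Y Z : C) (f : Hom X Y) (g : Hom Y Z) :
  is_zero_mor f -> is_zero_mor (g ∘ f).
Proof.
  intros (Q & a & b & HQ & ->). exists Q, a, (g ∘ b).
  split; [exact HQ | apply comp_assoc].
Qed.

Lemma is_zero_mor_compr (X Y Z : C) (f : Hom X Y) (g : Hom Y Z) :
  is_zero_mor g -> is_zero_mor (g ∘ f).
Proof.
  intros (Q & a & b & HQ & ->). exists Q, (a ∘ f), b.
  split; [exact HQ | symmetry; apply comp_assoc].
Qed.

Lemma is_zero_mor_star (X Y : C) (f : Hom X Y) :
  is_zero_mor f -> is_zero_mor (star f).
Proof.
  intros (Q & a & b & HQ & ->). exists Q, (star b), (star a).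
  split; [exact HQ | apply star_comp].
Qed.

Lemma is_zero_mor_star_inv (X Y : C) (f : Hom X Y) :
  is_zero_mor (star f) -> is_zero_mor f.
Proof. intro H. rewrite <- (star_star f). now apply is_zero_mor_star. Qed.

Lemma zero_mor_unique (X Y : C) (f f' : Hom X Y) :
  is_zero_mor f -> is_zero_mor f' -> f = f'.
Proof.
  intros (Q & a & b & [_ HQ] & ->) (Q' & a' & b' & [HQ' _] & ->).
  destruct (HQ Q') as [phi Hphi].
  destruct (HQ Y) as [b0 Hb0].
  destruct (HQ' X) as [a0 Ha0].
  assert (Eb : b = b' ∘ phi) by now rewrite (Hb0 b), (Hb0 (b' ∘ phi)).
  assert (Ea : phi ∘ a = a') by now rewrite (Ha0 (phi ∘ a)), (Ha0 a').
  now rewrite Eb, <- comp_assoc, Ea.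
Qed.

Section Biproduct.
Variables (X Y P : C) (s1 : Hom X P) (r1 : Hom P X) (s2 : Hom Y P) (r2 : Hom P Y).
Hypothesis HB : is_biproduct s1 r1 s2 r2.

Lemma biproduct_tuple (W : C) (f : Hom W X) (g : Hom W Y) :
  exists u : Hom W P, r1 ∘ u = f /\ r2 ∘ u = g.
Proof.
  destruct HB as (_ & _ & _ & _ & Hp & _).
  destruct (Hp W f g) as (u & Hu1 & Hu2 & _). now exists u.
Qed.

Lemma biproduct_cotuple (W : C) (f : Hom X W) (g : Hom Y W) :
  exists v : Hom P W, v ∘ s1 = f /\ v ∘ s2 = g.
Proof.
  destruct HB as (_ & _ & _ & _ & _ & Hc).
  destruct (Hc W f g) as (v & Hv1 & Hv2 & _). now exists v.
Qed.

Lemma biproduct_hom_ext (W : C) (u u' : Hom W P) :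
  r1 ∘ u = r1 ∘ u' -> r2 ∘ u = r2 ∘ u' -> u = u'.
Proof.
  destruct HB as (_ & _ & _ & _ & Hp & _). intros E1 E2.
  destruct (Hp W (r1 ∘ u) (r2 ∘ u)) as (w & _ & _ & Hw).
  now rewrite (Hw u), (Hw u').
Qed.

Lemma biproduct_cohom_ext (W : C) (v v' : Hom P W) :
  v ∘ s1 = v' ∘ s1 -> v ∘ s2 = v' ∘ s2 -> v = v'.
Proof.
  destruct HB as (_ & _ & _ & _ & _ & Hc). intros E1 E2.
  destruct (Hc W (v ∘ s1) (v ∘ s2)) as (w & _ & _ & Hw).
  now rewrite (Hw v), (Hw v').
Qed.

Lemma is_biproduct_sym : is_biproduct s2 r2 s1 r1.
Proof.
  destruct HB as (H1 & H2 & H21 & H12 & Hp & Hc).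
  split; [exact H2 | split; [exact H1 | split; [exact H12 | split; [exact H21 |]]]].
  split.
  - intros W f g. destruct (Hp W g f) as (u & Hu1 & Hu2 & Hu).
    exists u. split; [exact Hu2 | split; [exact Hu1 |]].
    intros u' E2 E1. now apply Hu.
  - intros W f g. destruct (Hc W g f) as (v & Hv1 & Hv2 & Hv).
    exists v. split; [exact Hv2 | split; [exact Hv1 |]].
    intros v' E2 E1. now apply Hv.
Qed.

End Biproduct.

Lemma is_orthonormal_biproduct_sym (X Y P : C) (s1 : Hom X P) (s2 : Hom Y P) :
  is_orthonormal_biproduct s1 s2 -> is_orthonormal_biproduct s2 s1.
Proof. apply is_biproduct_sym. Qed.

Lemma biproduct_proj_cotuple (Y Z T B B' P : C) (sY : Hom Y T) (sZ : Hom Z T)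
    (s1 : Hom B P) (r1 : Hom P B) (s2 : Hom B' P) (r2 : Hom P B')
    (a : Hom Y B) (b : Hom Z B') (w : Hom T P) :
  is_orthonormal_biproduct sY sZ -> is_biproduct s1 r1 s2 r2 ->
  w ∘ sY = s1 ∘ a -> w ∘ sZ = s2 ∘ b -> r1 ∘ w = a ∘ star sY.
Proof.
  intros HT HP EY EZ.
  pose proof HT as (HsY & _ & _ & HzYZ & _).
  pose proof HP as (Hr1 & _ & _ & Hz12 & _).
  apply (biproduct_cohom_ext HT); rewrite <- !comp_assoc.
  - now rewrite EY, HsY, comp_assoc, Hr1, comp_id_l, comp_id_r.
  - rewrite EZ, comp_assoc. apply zero_mor_unique.
    + now apply is_zero_mor_compr.
    + now apply is_zero_mor_compl.
Qed.

Lemma gram_entry (X Y A T : C) (c : Hom A T) (i : Hom X A) (j : Hom Y A) :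
  star (c ∘ j) ∘ (c ∘ i) = star j ∘ (star c ∘ c ∘ i).
Proof. now rewrite !star_comp, !comp_assoc. Qed.

Lemma is_codilation_gram (X Y A T T' : C) (f : Hom X Y) (i1 : Hom X A)
    (i2 : Hom Y A) (c : Hom A T) (c' : Hom A T') :
  star c ∘ c = star c' ∘ c' ->
  is_codilation f (c ∘ i1) (c ∘ i2) -> is_codilation f (c' ∘ i1) (c' ∘ i2).
Proof.
  unfold is_codilation, isometry. intro Hg.
  now rewrite !gram_entry, <- Hg, <- !gram_entry.
Qed.

Lemma codilation_gram_unique (X Y A T T' : C) (f : Hom X Y) (iX : Hom X A)
    (iY : Hom Y A) (c : Hom A T) (c' : Hom A T') :
  is_orthonormal_biproduct iX iY ->
  is_codilation f (c ∘ iX) (c ∘ iY) -> is_codilation f (c' ∘ iX) (c' ∘ iY) ->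
  star c ∘ c = star c' ∘ c'.
Proof.
  unfold is_codilation, isometry.
  intros HA (HX & HY & Hf) (HX' & HY' & Hf').
  apply (biproduct_cohom_ext HA); apply (biproduct_hom_ext HA);
    rewrite <- !gram_entry.
  - now rewrite HX, HX'.
  - now rewrite Hf, Hf'.
  - now rewrite (star_comp_swap (c ∘ iX)), (star_comp_swap (c' ∘ iX)), Hf, Hf'.
  - now rewrite HY, HY'.
Qed.

Lemma isometry_of_gram_factor (A M T : C) (e : Hom A M) (h : Hom M T) :
  epi e -> star (h ∘ e) ∘ (h ∘ e) = star e ∘ e -> isometry h.
Proof.
  intros He Hg. apply He. apply (epi_star_cancel He).
  now rewrite comp_id_l, !comp_assoc, <- star_comp, <- comp_assoc, Hg.
Qed.

Lemma is_sum_gram (X Y Z T : C) (sY : Hom Y T) (sZ : Hom Z T) (t : Hom X T)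
    (f : Hom X Y) (y : Hom X Z) (h : Hom X X) :
  is_orthonormal_biproduct sY sZ -> star sY ∘ t = f -> star sZ ∘ t = y ->
  is_sum (star f ∘ f) (star y ∘ y) h -> h = star t ∘ t.
Proof.
  intros HT Hf Hy (P & s1 & r1 & s2 & r2 & u & v & HP & Hu1 & Hu2 & Hv1 & Hv2 & ->).
  destruct (biproduct_cotuple HT (s1 ∘ star f) (s2 ∘ star y)) as (w & HwY & HwZ).
  assert (Hr1w : r1 ∘ w = star f ∘ star sY)
    by exact (biproduct_proj_cotuple HT HP HwY HwZ).
  assert (Hr2w : r2 ∘ w = star y ∘ star sZ)
    by exact (biproduct_proj_cotuple (is_orthonormal_biproduct_sym HT)
                (is_biproduct_sym HP) HwZ HwY).
  assert (Hwt : w ∘ t = u).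
  { apply (biproduct_hom_ext HP); rewrite comp_assoc.
    - now rewrite Hr1w, <- comp_assoc, Hf, Hu1.
    - now rewrite Hr2w, <- comp_assoc, Hy, Hu2. }
  assert (Hvw : v ∘ w = star t).
  { apply (biproduct_cohom_ext HT); rewrite <- comp_assoc.
    - now rewrite HwY, comp_assoc, Hv1, comp_id_l, <- Hf, star_comp, star_star.
    - now rewrite HwZ, comp_assoc, Hv2, comp_id_l, <- Hy, star_comp, star_star. }
  now rewrite <- Hwt, comp_assoc, Hvw.
Qed.

Section PreHilbert.
Hypothesis HP : pre_hilbert C.

Lemma contraction_codilation (X Y : C) (f : Hom X Y) :
  contraction f -> exists (T : C) (t1 : Hom X T) (t2 : Hom Y T), is_codilation f t1 t2.
Proof.
  intros (Z & y & Hsum).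
  destruct HP as (_ & R2 & _).
  destruct (R2 Y Z) as (T & sY & sZ & HT).
  destruct (biproduct_tuple HT f y) as (t & Hf & Hy).
  exists T, t, sY. split; [| split; [apply HT | exact Hf]].
  symmetry. exact (is_sum_gram HT Hf Hy Hsum).
Qed.

Lemma zero_epi_factorization (A T : C) (c : Hom A T) :
  exists (M : C) (m : Hom M T) (e : Hom A M), isometry m /\ m ∘ e = c /\ zero_epi e.
Proof.
  destruct HP as (_ & _ & R3 & _).
  destruct (R3 T A (star c)) as (K & k & [Hkz Hkk] & _).
  destruct (R3 T K (star k)) as (M & m & [Hmz Hmk] & Hm).
  assert (Hkc : is_zero_mor (star k ∘ c)).
  { rewrite star_comp_swap. apply is_zero_mor_star. exact Hkz. }
  destruct (Hmk A c Hkc) as (e & He & _).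
  exists M, m, e. split; [exact Hm | split; [exact He |]].
  intros W a Hae.
  assert (Hma : is_zero_mor (star c ∘ (m ∘ star a))).
  { rewrite <- He, star_comp, <- comp_assoc, isometry_cancel by exact Hm.
    rewrite <- star_comp. now apply is_zero_mor_star. }
  destruct (Hkk W (m ∘ star a) Hma) as (a' & Ha' & _).
  apply is_zero_mor_star_inv.
  rewrite <- (isometry_cancel (star a) Hm), <- Ha', comp_assoc.
  apply is_zero_mor_compr. rewrite star_comp_swap. now apply is_zero_mor_star.
Qed.

(* (R4) makes the diagonal a kernel; pulling it back along <a, b> turns the
   equalizer of a and b into a kernel. *)
Lemma equalizer_kernel (M W : C) (a b : Hom M W) :
  exists (Z E : C) (g : Hom M Z) (j : Hom E M), is_kernel g j /\ a ∘ j = b ∘ j /\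
    forall (V : C) (x : Hom V M), a ∘ x = b ∘ x -> is_zero_mor (g ∘ x).
Proof.
  destruct HP as (_ & R2 & R3 & R4).
  destruct (R2 W W) as (P & s1 & s2 & HB).
  destruct (biproduct_tuple HB (idm W) (idm W)) as (d & Hd1 & Hd2).
  destruct (R4 W P s1 s2 HB d Hd1 Hd2) as (Z & q & [Hqd Hqk]).
  destruct (biproduct_tuple HB a b) as (u & Hu1 & Hu2).
  destruct (R3 M Z (q ∘ u)) as (E & j & Hj & _).
  exists Z, E, (q ∘ u), j. split; [exact Hj | split].
  - assert (Huj : is_zero_mor (q ∘ (u ∘ j))) by (rewrite comp_assoc; apply Hj).
    destruct (Hqk E (u ∘ j) Huj) as (x & Hx & _).
    now rewrite <- Hu1, <- Hu2, <- !comp_assoc, <- Hx, !comp_assoc, Hd1, Hd2.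
  - intros V x Hx.
    assert (Hux : u ∘ x = d ∘ (a ∘ x)).
    { apply (biproduct_hom_ext HB); rewrite !comp_assoc.
      - now rewrite Hu1, Hd1, comp_id_l.
      - now rewrite Hu2, Hd2, comp_id_l. }
    rewrite <- comp_assoc, Hux, comp_assoc. now apply is_zero_mor_compr.
Qed.

Lemma is_zero_mor_of_zero_epi_kernel (A M Z E : C) (g : Hom M Z) (j : Hom E M)
    (e' : Hom A E) :
  is_kernel g j -> zero_epi (j ∘ e') -> is_zero_mor g.
Proof.
  intros [Hgj _] He.
  destruct HP as (_ & _ & R3 & _).
  destruct (R3 M E (star j)) as (L & jp & [Hjp Hjpk] & _).
  assert (Hjpe : is_zero_mor (star jp ∘ (j ∘ e'))).
  { rewrite comp_assoc, star_comp_swap. apply is_zero_mor_compr.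
    now apply is_zero_mor_star. }
  apply He, is_zero_mor_star_inv in Hjpe.
  assert (Hg : is_zero_mor (star j ∘ star g)).
  { rewrite <- star_comp. now apply is_zero_mor_star. }
  destruct (Hjpk Z (star g) Hg) as (x & Hx & _).
  apply is_zero_mor_star_inv. rewrite <- Hx. now apply is_zero_mor_compr.
Qed.

Lemma zero_epi_epi (A M : C) (e : Hom A M) : zero_epi e -> epi e.
Proof.
  intros He W a b Eab.
  destruct (equalizer_kernel a b) as (Z & E & g & j & Hj & Haj & Hg).
  destruct (proj2 Hj A e (Hg A e Eab)) as (e' & He' & _).
  rewrite <- He' in He.
  pose proof (is_zero_mor_of_zero_epi_kernel Hj He) as Hg0.
  destruct (proj2 Hj M (idm M) (is_zero_mor_compr (idm M) Hg0)) as (w & Hw & _).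
  now rewrite <- (comp_id_r a), <- (comp_id_r b), <- Hw, !comp_assoc, Haj.
Qed.

End PreHilbert.

Lemma is_codilator_of_epi (X Y A M : C) (f : Hom X Y) (iX : Hom X A)
    (iY : Hom Y A) (e : Hom A M) :
  is_orthonormal_biproduct iX iY -> douglian_mor e -> epi e ->
  is_codilation f (e ∘ iX) (e ∘ iY) -> is_codilator f (e ∘ iX) (e ∘ iY).
Proof.
  intros HA HD He Hcod. split; [exact Hcod |].
  intros T t1 t2 Hcod'.
  destruct (biproduct_cotuple HA t1 t2) as (c & HcX & HcY).
  assert (Hg : star c ∘ c = star e ∘ e).
  { apply (codilation_gram_unique (f := f) HA); [rewrite HcX, HcY |]; assumption. }
  destruct (HD T c Hg) as (h & Hh).
  exists h. split; [| split; [| split]].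
  - apply (isometry_of_gram_factor He). now rewrite Hh.
  - now rewrite comp_assoc, Hh.
  - now rewrite comp_assoc, Hh.
  - intros t' _ Ht1 Ht2. apply He. rewrite Hh.
    apply (biproduct_cohom_ext HA); rewrite <- comp_assoc; congruence.
Qed.

End StarCategory.

Local Notation "g ∘ f" := (comp g f) (at level 40, left associativity).

Theorem corollary7p17 (C : StarCat) (HC : douglian C)
  (X Y : C) (f : Hom X Y) (Hf : contraction f) : has_codilator f.
Proof.
  destruct HC as [HP HD].
  destruct (contraction_codilation HP Hf) as (T & t1 & t2 & Hcod).
  destruct (proj1 (proj2 HP) X Y) as (A & iX & iY & HA).
  destruct (biproduct_cotuple HA t1 t2) as (c & HcX & HcY).
  destruct (zero_epi_factorization HP c) as (M & m & e & Hm & Hme & He).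
  exists M, (e ∘ iX), (e ∘ iY).
  apply is_codilator_of_epi; [exact HA | apply HD | exact (zero_epi_epi HP He) |].
  apply (is_codilation_gram (c := c)).
  - now rewrite <- Hme, star_comp, <- comp_assoc, isometry_cancel.
  - now rewrite HcX, HcY.
Qed.
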